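(* Let $n,m,d\ge 1$. For each $i\in\{1,\dots,n\}$ let $\mathcal{B}_i\in\mathbb{R}^{l_i\times m}$, $Z_i\in\mathbb{R}^{k_i\times l_i}$ and $\mu_i\ge 0$ be such that $M_i=\mathcal{B}_i\mathcal{B}_i^{\top}+\mu_i Z_i^{\top}Z_i$ is invertible. Define $Q_i=\mathcal{B}_i^{\top}M_i^{-1}\mathcal{B}_i\in\mathbb{R}^{m\times m}$, $\mathcal{Q}_{II}=\sum_{i=1}^n Q_i$ and $\mathcal{P}_{II}=\sum_{i=1}^n(I_m-Q_i)=nI_m-\mathcal{Q}_{II}$, and let $\mathbf{1}\in\mathbb{R}^m$ be the all-ones vector. Then the following statements are equivalent: (a) $\mathcal{P}_{II}\mathbf{1}=0$; (b) $\mathcal{Q}_{II}\mathbf{1}=n\mathbf{1}$; (c) $Q_i\mathbf{1}=\mathbf{1}$ for every $i\in\{1,\dots,n\}$; (d) the function $S\mapsto\mathrm{tr}(S\mathcal{P}_{II}S^{\top})$ on $\mathbb{R}^{d\times m}$ is invariant to translations, i.e. $\mathrm{tr}\big((S+t\mathbf{1}^{\top})\mathcal{P}_{II}(S+t\mathbf{1}^{\top})^{\top}\big)=\mathrm{tr}(S\mathcal{P}_{II}S^{\top})$ for all $S\in\mathbb{R}^{d\times m}$ and all $t\in\mathbb{R}^d$; (e) for every $i\in\{1,\dots,n\}$ there exists $x_i\in\mathbb{R}^{l_i}$ with $\mathcal{B}_i^{\top}x_i=\mathbf{1}$ and, if $\mu_i>0$, additionally $Z_ix_i=0$.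
   Context: In the paper, $\mathcal{B}_i=\mathcal{B}_i(D_i)$ is the matrix obtained by applying a feature map $\beta_i:\mathbb{R}^d\to\mathbb{R}^{l_i}$ to each column (point) of a datum shape $D_i\in\mathbb{R}^{d\times m}$, $Z_i$ is a regularization matrix and $\mu_i$ a smoothing weight of a linear basis warp $p\mapsto W^{\top}\beta_i(p)$; for the statement only the matrices themselves matter. *)

From mathcomp Require Import all_boot all_order all_algebra.
Set Implicit Arguments. Unset Strict Implicit. Unset Printing Implicit Defensive.
Import Order.TTheory GRing.Theory Num.Theory.
Local Open Scope ring_scope.

Definition ones (R : realFieldType) (m : nat) : 'cV[R]_m := const_mx 1.

Definition Mmat (R : realFieldType) (m l k : nat)
  (B : 'M[R]_(l, m)) (Z : 'M[R]_(k, l)) (mu : R) : 'M[R]_l :=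
  B *m B^T + mu *: (Z^T *m Z).

Definition Qmat (R : realFieldType) (m l k : nat)
  (B : 'M[R]_(l, m)) (Z : 'M[R]_(k, l)) (mu : R) : 'M[R]_m :=
  B^T *m invmx (Mmat B Z mu) *m B.

Definition QII (R : realFieldType) (n m : nat) (l k : 'I_n -> nat)
  (B : forall i, 'M[R]_(l i, m)) (Z : forall i, 'M[R]_(k i, l i))
  (mu : 'I_n -> R) : 'M[R]_m :=
  \sum_(i < n) Qmat (B i) (Z i) (mu i).

Definition PII (R : realFieldType) (n m : nat) (l k : 'I_n -> nat)
  (B : forall i, 'M[R]_(l i, m)) (Z : forall i, 'M[R]_(k i, l i))
  (mu : 'I_n -> R) : 'M[R]_m :=
  \sum_(i < n) (1%:M - Qmat (B i) (Z i) (mu i)).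

(** For a block with [y = M^-1 B 1], expanding [M y = B 1] gives
      [1^T (I - Q) 1 = |1 - B^T y|^2 + mu |Z y|^2].
    So this defect is nonnegative and vanishes exactly when [y] witnesses (e);
    conversely any witness [x] of (e) solves [M x = B 1], so [x = y] and
    [Q 1 = B^T x = 1]. Hence [1^T P 1] is a sum of nonnegative defects, zero
    iff every [Q_i 1 = 1]. As [P] is symmetric, [P 1 = 0] makes the trace form
    translation invariant, and translating [S = 0] by the all-ones [t]
    evaluates it to [d * 1^T P 1]. *)
From mathcomp Require Import all_boot all_order all_algebra.
From mathcomp Require Import ring.
Set Implicit Arguments. Unset Strict Implicit. Unset Printing Implicit Defensive.
Import Order.TTheory GRing.Theory Num.Theory.
Local Open Scope ring_scope.

Lemma dotmxC (R : comPzSemiRingType) p (v w : 'cV[R]_p) : v^T *m w = w^T *m v.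
Proof.
apply/matrixP => i j; rewrite !ord1.
by rewrite -[v^T *m w]trmxK trmx_mul trmxK mxE.
Qed.

Section SquaredNorm.
Variables (R : realFieldType) (p : nat).

Definition sqnorm (w : 'cV[R]_p) : R := (w^T *m w) 0 0.

Lemma sqnormE w : sqnorm w = \sum_i w i 0 ^+ 2.
Proof. by rewrite /sqnorm mxE; apply: eq_bigr => i _; rewrite mxE expr2. Qed.

Lemma sqnorm_ge0 w : 0 <= sqnorm w.
Proof. by rewrite sqnormE sumr_ge0 // => i _; rewrite sqr_ge0. Qed.

Lemma sqnorm_eq0 w : (sqnorm w == 0) = (w == 0).
Proof.
apply/idP/eqP => [|->]; last by rewrite /sqnorm mulmx0 mxE.
rewrite sqnormE psumr_eq0 => [/allP w0|i _]; last exact: sqr_ge0.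
apply/matrixP => i j; rewrite (ord1 j) mxE.
by apply/eqP; rewrite -sqrf_eq0; exact: w0 (mem_index_enum i).
Qed.

Lemma sqnormB v w : sqnorm (v - w) = sqnorm v - (v^T *m w) 0 0 *+ 2 + sqnorm w.
Proof.
rewrite /sqnorm (linearB trmx) /= mulmxBl !mulmxBr (dotmxC w v) !mxE.
ring.
Qed.

End SquaredNorm.

Section Block.
Variables (R : realFieldType) (m l k : nat).
Variables (B : 'M[R]_(l, m)) (Z : 'M[R]_(k, l)) (mu : R).

Local Notation M := (Mmat B Z mu).
Local Notation Q := (Qmat B Z mu).

Lemma Mmat_sym : M^T = M.
Proof. by rewrite /Mmat linearD linearZ /= !trmx_mul !trmxK. Qed.

Lemma Qmat_sym : Q^T = Q.
Proof. by rewrite /Qmat !trmx_mul trmx_inv Mmat_sym trmxK mulmxA. Qed.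

Lemma Mmat_form (y : 'cV[R]_l) :
  (y^T *m M *m y) 0 0 = sqnorm (B^T *m y) + mu * sqnorm (Z *m y).
Proof.
by rewrite /Mmat /sqnorm mulmxDr mulmxDl -scalemxAr -scalemxAl !trmx_mul !trmxK
  !mulmxA !mxE.
Qed.

Hypothesis M_unit : M \in unitmx.

Lemma Qmat_defect (v : 'cV[R]_m) :
  let y := invmx M *m (B *m v) in
  sqnorm v - (v^T *m Q *m v) 0 0 = sqnorm (v - B^T *m y) + mu * sqnorm (Z *m y).
Proof.
move=> y; have My : M *m y = B *m v by rewrite mulKVmx.
have vQv : v^T *m Q *m v = y^T *m M *m y.
  by rewrite -[RHS]mulmxA My /Qmat /y !trmx_mul trmx_inv Mmat_sym !mulmxA.
have vBy : (v^T *m (B^T *m y)) 0 0 = (y^T *m M *m y) 0 0.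
  by rewrite -[y^T *m M *m y]mulmxA My dotmxC trmx_mul trmxK mulmxA.
rewrite vQv sqnormB vBy Mmat_form; ring.
Qed.

Hypothesis mu_ge0 : 0 <= mu.

Lemma Qmat_form_le (v : 'cV[R]_m) : (v^T *m Q *m v) 0 0 <= sqnorm v.
Proof.
by rewrite -subr_ge0 Qmat_defect addr_ge0 ?mulr_ge0 ?sqnorm_ge0.
Qed.

Lemma Qmat_witness_of_form (v : 'cV[R]_m) :
  (v^T *m Q *m v) 0 0 = sqnorm v ->
  exists x : 'cV[R]_l, B^T *m x = v /\ (0 < mu -> Z *m x = 0).
Proof.
move/eqP; rewrite eq_sym -subr_eq0 Qmat_defect.
rewrite paddr_eq0 ?mulr_ge0 ?sqnorm_ge0 // mulf_eq0 !sqnorm_eq0.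
case/andP=> /eqP/subr0_eq vBy Zy0; exists (invmx M *m (B *m v)); split=> // mu_gt0.
by apply/eqP; move: Zy0; rewrite (gt_eqF mu_gt0).
Qed.

Lemma Qmat_fixed_of_witness (v : 'cV[R]_m) :
  (exists x : 'cV[R]_l, B^T *m x = v /\ (0 < mu -> Z *m x = 0)) -> Q *m v = v.
Proof.
case=> x [Bx Zx].
have Mx : M *m x = B *m v.
  rewrite /Mmat mulmxDl -mulmxA Bx -scalemxAl -mulmxA.
  have [->|mu_gt0] := eqVneq mu 0; first by rewrite scale0r addr0.
  by rewrite Zx ?mulmx0 ?scaler0 ?addr0 // lt_def mu_gt0.
by rewrite /Qmat -!mulmxA -Mx mulKmx.
Qed.

End Block.

Section BlockSums.
Variables (R : realFieldType) (n m : nat) (l k : 'I_n -> nat).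
Variables (B : forall i, 'M[R]_(l i, m)) (Z : forall i, 'M[R]_(k i, l i)).
Variable mu : 'I_n -> R.

Local Notation P := (PII B Z mu).
Local Notation Q i := (Qmat (B i) (Z i) (mu i)).

Lemma PII_sym : P^T = P.
Proof.
rewrite /PII linear_sum; apply: eq_bigr => i _.
by rewrite linearB /= trmx1 Qmat_sym.
Qed.

Lemma PII_mulmx (v : 'cV[R]_m) : P *m v = \sum_i (v - Q i *m v).
Proof. by rewrite /PII mulmx_suml; apply: eq_bigr => i _; rewrite mulmxBl mul1mx. Qed.

Lemma PII_QII_mulmx (v : 'cV[R]_m) : P *m v = v *+ n - QII B Z mu *m v.
Proof. by rewrite PII_mulmx sumrB sumr_const card_ord /QII mulmx_suml. Qed.

Lemma PII_form (v : 'cV[R]_m) :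
  (v^T *m P *m v) 0 0 = \sum_i (sqnorm v - (v^T *m Q i *m v) 0 0).
Proof.
rewrite -mulmxA PII_mulmx mulmx_sumr summxE; apply: eq_bigr => i _.
by rewrite mulmxBr !mulmxA mxE [X in _ + X]mxE.
Qed.

Lemma PII_mulmx_eq0 (v : 'cV[R]_m) : (forall i, Q i *m v = v) -> P *m v = 0.
Proof. by move=> Qv; rewrite PII_mulmx big1 // => i _; rewrite Qv subrr. Qed.

Hypothesis mu_ge0 : forall i, 0 <= mu i.
Hypothesis M_unit : forall i, Mmat (B i) (Z i) (mu i) \in unitmx.

Lemma PII_witness_of_form0 (v : 'cV[R]_m) :
  (v^T *m P *m v) 0 0 = 0 ->
  forall i, exists x : 'cV[R]_(l i), (B i)^T *m x = v /\ (0 < mu i -> Z i *m x = 0).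
Proof.
move/eqP; rewrite PII_form psumr_eq0 => [/allP defect0 i|i _]; last first.
  by rewrite subr_ge0 Qmat_form_le.
apply: Qmat_witness_of_form => //; apply/eqP; rewrite eq_sym -subr_eq0.
exact: implyP (defect0 i (mem_index_enum i)) isT.
Qed.

End BlockSums.

Section TranslatedTraceForm.
Variables (R : comPzSemiRingType) (d m : nat) (P : 'M[R]_m) (v : 'cV[R]_m).

Lemma mxtrace_form_translate (S : 'M[R]_(d, m)) (t : 'cV[R]_d) :
  P^T = P -> P *m v = 0 ->
  \tr ((S + t *m v^T) *m P *m (S + t *m v^T)^T) = \tr (S *m P *m S^T).
Proof.
move=> P_sym Pv0; have vP0 : v^T *m P = 0 by rewrite -P_sym -trmx_mul Pv0 trmx0.
rewrite mulmxDl -(mulmxA t) vP0 mulmx0 addr0 (linearD trmx) /= trmx_mul trmxK.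
by rewrite mulmxDr mulmxA -(mulmxA S P v) Pv0 mulmx0 mul0mx addr0.
Qed.

Lemma mxtrace_rank1_form (t : 'cV[R]_d) :
  \tr (t *m v^T *m P *m (t *m v^T)^T) = (t^T *m t) 0 0 * (v^T *m P *m v) 0 0.
Proof.
rewrite trmx_mul trmxK !mulmxA mxtrace_mulC -!mulmxA mulmxA (mulmxA v^T).
by rewrite /mxtrace big_ord1 mxE big_ord1.
Qed.

End TranslatedTraceForm.

Lemma sqnorm_ones (R : realFieldType) d : sqnorm (ones R d) = d%:R.
Proof.
by rewrite sqnormE (eq_bigr (fun=> 1)) ?sumr_const ?card_ord // => i _; rewrite mxE expr1n.
Qed.

Theorem theorem2 (R : realFieldType) (n m d : nat)
  (hn : (0 < n)%N) (hm : (0 < m)%N) (hd : (0 < d)%N)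
  (l k : 'I_n -> nat)
  (B : forall i, 'M[R]_(l i, m)) (Z : forall i, 'M[R]_(k i, l i))
  (mu : 'I_n -> R)
  (hmu : forall i, 0 <= mu i)
  (hM : forall i, Mmat (B i) (Z i) (mu i) \in unitmx) :
  [<->
    (* (a) *) PII B Z mu *m ones R m = 0;
    (* (b) *) QII B Z mu *m ones R m = n%:R *: ones R m;
    (* (c) *) (forall i, Qmat (B i) (Z i) (mu i) *m ones R m = ones R m);
    (* (d) *) (forall (S : 'M[R]_(d, m)) (t : 'cV[R]_d),
                 \tr ((S + t *m (ones R m)^T) *m PII B Z mu *m (S + t *m (ones R m)^T)^T)
                 = \tr (S *m PII B Z mu *m S^T));
    (* (e) *) (forall i, exists x : 'cV[R]_(l i),
                 (B i)^T *m x = ones R m /\ (0 < mu i -> Z i *m x = 0))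
  ].
Proof.
tfae.
- by move=> P1; apply/eqP; rewrite scaler_nat eq_sym -subr_eq0 -PII_QII_mulmx P1.
- move=> Q1 i; apply: Qmat_fixed_of_witness => //; move: i.
  apply: PII_witness_of_form0 => //.
  by rewrite -mulmxA PII_QII_mulmx Q1 scaler_nat subrr mulmx0 mxE.
- by move=> Q1 S t; rewrite mxtrace_form_translate ?PII_sym ?PII_mulmx_eq0.
- move=> translate; apply: PII_witness_of_form0 => //; apply/eqP.
  have := translate 0 (ones R d).
  rewrite !add0r !mul0mx mxtrace0 mxtrace_rank1_form -/(sqnorm _) sqnorm_ones.
  by move/eqP; rewrite mulf_eq0 pnatr_eq0 (gtn_eqF hd).
- by move=> witness; apply: PII_mulmx_eq0 => i; exact: Qmat_fixed_of_witness.
Qed.
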